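(* Let $p>1$ be an integer. Let $A$ be the free abelian group on $a,b,c$, let $B=\langle A,t\mid t^{-1}at=ab,\ t^{-1}bt=bc,\ t^{-1}ct=c\rangle$ (an HNN-extension, torsion-free nilpotent of class 3), let $F=\langle f\rangle$ be infinite cyclic, $K=B\times F$, and let $G_p=\langle K,s\rangle\le\overline{K}$ where $s$ is the unique $p$-th root of $bf$ in the rational closure $\overline{K}$. Then $G_p$ is directly indecomposable (it has no nontrivial direct decomposition); in particular it has no nontrivial abelian direct factor.
   Context: The rational closure $\overline{K}$ of a finitely generated torsion-free nilpotent group $K$ is the torsion-free nilpotent group containing $K$ in which every element has a unique $n$-th root for each $n\ge1$ and every element has a positive power in $K$. *)

From Stdlib Require Import ZArith List.
Import ListNotations.

Record Group := {
  carrier :> Type;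
  gmul : carrier -> carrier -> carrier;
  gone : carrier;
  ginv : carrier -> carrier;
  gmulA : forall x y z, gmul x (gmul y z) = gmul (gmul x y) z;
  gmul1l : forall x, gmul gone x = x;
  gmulVl : forall x, gmul (ginv x) x = gone
}.

Arguments gmul {g} _ _.
Arguments gone {g}.
Arguments ginv {g} _.

Section Defs.
Variable G : Group.

Fixpoint npow (x : G) (n : nat) : G :=
  match n with O => gone | S k => gmul x (npow x k) end.

Definition zpow (x : G) (z : Z) : G :=
  match z with
  | Z0 => gone
  | Zpos q => npow x (Pos.to_nat q)
  | Zneg q => ginv (npow x (Pos.to_nat q))
  end.

Definition conj (x y : G) : G := gmul (ginv y) (gmul x y).
Definition comm (x y : G) : G := gmul (ginv x) (gmul (ginv y) (gmul x y)).

Fixpoint comm_iter (x : G) (ys : list G) : G :=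
  match ys with [] => x | y :: ys' => comm_iter (comm x y) ys' end.

Definition nilpotent : Prop :=
  exists c : nat, forall (x : G) (ys : list G), length ys = c -> comm_iter x ys = gone.

Definition torsion_free : Prop :=
  forall (x : G) (n : nat), (0 < n)%nat -> npow x n = gone -> x = gone.

Definition is_subgroup (H : G -> Prop) : Prop :=
  H gone /\ (forall x y, H x -> H y -> H (gmul x y)) /\ (forall x, H x -> H (ginv x)).

Inductive gen (S : G -> Prop) : G -> Prop :=
  | gen_in : forall x, S x -> gen S x
  | gen_one : gen S gone
  | gen_mul : forall x y, gen S x -> gen S y -> gen S (gmul x y)
  | gen_inv : forall x, gen S x -> gen S (ginv x).

Definition direct_decomposition (Gr H L : G -> Prop) : Prop :=
  is_subgroup H /\ is_subgroup L /\
  (forall x, H x -> Gr x) /\ (forall x, L x -> Gr x) /\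
  (forall g h, Gr g -> H h -> H (conj h g)) /\
  (forall g l, Gr g -> L l -> L (conj l g)) /\
  (forall x, H x -> L x -> x = gone) /\
  (forall g, Gr g -> exists h l, H h /\ L l /\ g = gmul h l).

Definition trivial_sub (H : G -> Prop) : Prop := forall x, H x -> x = gone.

Definition directly_indecomposable (Gr : G -> Prop) : Prop :=
  forall H L, direct_decomposition Gr H L -> trivial_sub H \/ trivial_sub L.

End Defs.

Arguments npow {G} _ _.
Arguments zpow {G} _ _.
Arguments conj {G} _ _.
Arguments comm {G} _ _.
Arguments nilpotent G : clear implicits.
Arguments torsion_free G : clear implicits.
Arguments gen {G} _ _.
Arguments directly_indecomposable {G} _.

From Stdlib Require Import ZArith List Lia Classical.
Import ListNotations.

(* Let u = [s,t].  Since s commutes with a, b, c, f and u^p = c, the group G_p is the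
   semidirect product of the free abelian group N = <a,b,s,u> by <t>, with t acting by
   a -> ab, b -> b u^p, s -> su, u -> u.  Commutators of G_p lie in <b,u>, the centre is
   {b^y s^(-py) u^w}, and an element commuting with some b^y u^w, y <> 0, lies in N.
   If a direct factor L is abelian it is central, so b = [a,t] and u = [s,t] lie in the
   other factor H; writing s = h l gives l^(1+py) in H and L, so l = 1 by torsion-freeness,
   whence s lies in H, the centre lies in H and L = 1.  If both factors are non-abelian,
   the commutators of non-commuting pairs must be nontrivial powers of u, one in each
   factor, contradicting H /\ L = 1. *)

Notation "x ** y" := (gmul x y) (at level 40, left associativity).

Lemma Z_nat_or_neg (z : Z) :
  (exists n, z = Z.of_nat n) \/ (exists n, z = (- Z.of_nat (S n))%Z).
Proof.
  destruct (Z_le_gt_dec 0 z).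
  - left. exists (Z.to_nat z). lia.
  - right. exists (Z.to_nat (- z) - 1)%nat. lia.
Qed.

Section GroupLemmas.
Variable G : Group.
Implicit Types x y g : G.

Lemma gmulVr x : x ** ginv x = gone.
Proof.
  assert (Hidem : (x ** ginv x) ** (x ** ginv x) = x ** ginv x).
  { rewrite <- gmulA, (gmulA _ (ginv x) x), gmulVl, gmul1l. reflexivity. }
  transitivity (ginv (x ** ginv x) ** (x ** ginv x) ** (x ** ginv x)).
  - rewrite gmulVl, gmul1l. reflexivity.
  - rewrite <- gmulA, Hidem, gmulVl. reflexivity.
Qed.

Lemma gmul1r x : x ** gone = x.
Proof. rewrite <- (gmulVl G x), gmulA, gmulVr, gmul1l. reflexivity. Qed.

Lemma gmulKl x y : ginv x ** (x ** y) = y.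
Proof. rewrite gmulA, gmulVl, gmul1l. reflexivity. Qed.

Lemma gmulVKl x y : x ** (ginv x ** y) = y.
Proof. rewrite gmulA, gmulVr, gmul1l. reflexivity. Qed.

Lemma gmulKr x y : x ** y ** ginv y = x.
Proof. rewrite <- gmulA, gmulVr, gmul1r. reflexivity. Qed.

Lemma gmulVKr x y : x ** ginv y ** y = x.
Proof. rewrite <- gmulA, gmulVl, gmul1r. reflexivity. Qed.

Lemma gmul_cancel_l x y (z : G) : x ** y = x ** z -> y = z.
Proof. intro E. rewrite <- (gmulKl x y), <- (gmulKl x z), E. reflexivity. Qed.

Lemma gmul_cancel_r x y (z : G) : y ** x = z ** x -> y = z.
Proof. intro E. rewrite <- (gmulKr y x), <- (gmulKr z x), E. reflexivity. Qed.

Lemma ginv_unique x y : x ** y = gone -> y = ginv x.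
Proof. intro E. apply (gmul_cancel_l x). rewrite E, gmulVr. reflexivity. Qed.

Lemma ginvK x : ginv (ginv x) = x.
Proof. symmetry. apply ginv_unique, gmulVl. Qed.

Lemma ginvM x y : ginv (x ** y) = ginv y ** ginv x.
Proof.
  symmetry. apply ginv_unique. rewrite <- gmulA, (gmulA _ y), gmulVr, gmul1l, gmulVr.
  reflexivity.
Qed.

Lemma ginv1 : ginv (@gone G) = gone.
Proof. symmetry. apply ginv_unique, gmul1l. Qed.

Definition commutes x y := x ** y = y ** x.

Lemma commutes_sym x y : commutes x y -> commutes y x.
Proof. unfold commutes. auto. Qed.

Lemma commutes_refl x : commutes x x.
Proof. reflexivity. Qed.

Lemma commutes1r x : commutes x gone.
Proof. unfold commutes. rewrite gmul1l, gmul1r. reflexivity. Qed.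

Lemma commutes_mulr x y (z : G) : commutes x y -> commutes x z -> commutes x (y ** z).
Proof.
  unfold commutes. intros Hy Hz. rewrite gmulA, Hy, <- gmulA, Hz, gmulA. reflexivity.
Qed.

Lemma commutes_invr x y : commutes x y -> commutes x (ginv y).
Proof.
  unfold commutes. intro H. apply (gmul_cancel_l y).
  rewrite gmulA, <- H, <- gmulA, gmulVr, gmul1r, gmulVKl. reflexivity.
Qed.

Lemma gmul_swap_mid x y (z w : G) : commutes y z -> x ** y ** (z ** w) = x ** z ** (y ** w).
Proof. intro H. rewrite gmulA, <- (gmulA _ x y z), H, !gmulA. reflexivity. Qed.

Lemma zpow_nat x n : zpow x (Z.of_nat n) = npow x n.
Proof. destruct n; simpl; [reflexivity|]. rewrite SuccNat2Pos.id_succ. reflexivity. Qed.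

Lemma zpow_opp x z : zpow x (- z) = ginv (zpow x z).
Proof. destruct z; simpl; [rewrite ginv1 | | rewrite ginvK]; reflexivity. Qed.

Lemma zpow1 x : zpow x 1 = x.
Proof. apply gmul1r. Qed.

Lemma npow_commutes x n : commutes x (npow x n).
Proof.
  induction n; simpl; [apply commutes1r|]. apply commutes_mulr; [apply commutes_refl|auto].
Qed.

Lemma zpow_succ x z : zpow x (Z.succ z) = zpow x z ** x.
Proof.
  destruct (Z_nat_or_neg z) as [[n ->]|[n ->]].
  - rewrite <- Nat2Z.inj_succ, !zpow_nat. apply npow_commutes.
  - replace (Z.succ (- Z.of_nat (S n))) with (- Z.of_nat n)%Z by lia.
    rewrite !zpow_opp, !zpow_nat. simpl. rewrite ginvM, gmulVKr. reflexivity.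
Qed.

Lemma zpow_pred x z : zpow x (Z.pred z) = zpow x z ** ginv x.
Proof.
  rewrite <- (Z.succ_pred z) at 2. rewrite zpow_succ, gmulKr. reflexivity.
Qed.

Lemma zpow_add x m n : zpow x (m + n) = zpow x m ** zpow x n.
Proof.
  induction n using Z.peano_ind.
  - rewrite Z.add_0_r, gmul1r. reflexivity.
  - rewrite Z.add_succ_r, !zpow_succ, IHn, gmulA. reflexivity.
  - rewrite Z.add_pred_r, !zpow_pred, IHn, gmulA. reflexivity.
Qed.

Lemma zpow_mul x m n : zpow x (m * n) = zpow (zpow x m) n.
Proof.
  induction n using Z.peano_ind.
  - rewrite Z.mul_0_r. reflexivity.
  - rewrite Z.mul_succ_r, zpow_add, zpow_succ, IHn. reflexivity.
  - rewrite Z.mul_pred_r, <- Z.add_opp_r, zpow_add, zpow_pred, IHn, zpow_opp. reflexivity.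
Qed.

Lemma commutes_zpowr x y n : commutes x y -> commutes x (zpow y n).
Proof.
  intro H. induction n using Z.peano_ind.
  - apply commutes1r.
  - rewrite zpow_succ. apply commutes_mulr; auto.
  - rewrite zpow_pred. apply commutes_mulr, commutes_invr; auto.
Qed.

Lemma commutes_zpow x y m n : commutes x y -> commutes (zpow x m) (zpow y n).
Proof. intro H. apply commutes_zpowr, commutes_sym, commutes_zpowr, commutes_sym, H. Qed.

Lemma zpow_mul_commutes x y n : commutes x y -> zpow (x ** y) n = zpow x n ** zpow y n.
Proof.
  intro H. assert (Hyx : forall m, commutes (zpow y m) x).
  { intro m. apply commutes_sym, commutes_zpowr, H. }
  induction n using Z.peano_ind.
  - rewrite gmul1l. reflexivity.
  - rewrite !zpow_succ, IHn, <- !gmulA. f_equal. rewrite !gmulA, Hyx. reflexivity.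
  - rewrite !zpow_pred, IHn, ginvM, <- !gmulA. f_equal.
    rewrite gmulA, <- zpow_pred, (commutes_invr _ _ (Hyx _)), zpow_pred. reflexivity.
Qed.

Lemma zpow_morph (phi : G -> G) x n :
  (forall u v, phi (u ** v) = phi u ** phi v) -> (forall u, phi (ginv u) = ginv (phi u)) ->
  phi gone = gone -> phi (zpow x n) = zpow (phi x) n.
Proof.
  intros Hmul Hinv H1. induction n using Z.peano_ind.
  - apply H1.
  - rewrite !zpow_succ, Hmul, IHn. reflexivity.
  - rewrite !zpow_pred, Hmul, Hinv, IHn. reflexivity.
Qed.

Lemma conj_mul x y g : conj (x ** y) g = conj x g ** conj y g.
Proof. unfold conj. rewrite !gmulA, gmulKr. reflexivity. Qed.

Lemma conj_inv x g : conj (ginv x) g = ginv (conj x g).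
Proof. unfold conj. rewrite !ginvM, ginvK, gmulA. reflexivity. Qed.

Lemma conj1 g : conj gone g = gone.
Proof. unfold conj. rewrite gmul1l, gmulVl. reflexivity. Qed.

Lemma conj_zpow x g n : conj (zpow x n) g = zpow (conj x g) n.
Proof. apply (zpow_morph (fun y => conj y g)); auto using conj_mul, conj_inv, conj1. Qed.

Lemma conj_npow x g n : conj (npow x n) g = npow (conj x g) n.
Proof. rewrite <- !zpow_nat. apply conj_zpow. Qed.

Lemma mul_conj x g : g ** conj x g = x ** g.
Proof. apply gmulVKl. Qed.

Lemma conj_id x g : commutes x g -> conj x g = x.
Proof. unfold commutes, conj. intro H. rewrite H, gmulKl. reflexivity. Qed.

Lemma comm1_commutes x y : comm x y = gone -> commutes x y.
Proof.
  unfold comm, commutes. intro H. apply ginv_unique in H. rewrite ginvK in H.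
  rewrite <- H at 2. rewrite gmulVKl. reflexivity.
Qed.

Lemma mul_comm x y : y ** x ** comm x y = x ** y.
Proof. unfold comm. rewrite <- gmulA, !gmulVKl. reflexivity. Qed.

Lemma commutes_comm (z : G) x y : commutes z x -> commutes z y -> commutes z (comm x y).
Proof.
  intros Hx Hy. unfold comm.
  repeat apply commutes_mulr; auto using commutes_invr.
Qed.

Lemma comm_mul_central x y z1 z2 :
  commutes z1 x -> commutes z1 y -> commutes z1 z2 -> commutes z2 x -> commutes z2 y ->
  comm (x ** z1) (y ** z2) = comm x y.
Proof.
  intros H1x H1y H12 H2x H2y.
  assert (H1w := commutes_comm _ _ _ H1x H1y).
  assert (H2w := commutes_comm _ _ _ H2x H2y).
  apply (gmul_cancel_l (y ** z2 ** (x ** z1))). rewrite mul_comm. symmetry.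
  unfold commutes in *.
  rewrite !gmulA, <- (gmulA _ y z2 x), H2x, gmulA, <- (gmulA _ (y ** x ** z2) z1), H1w.
  rewrite !gmulA, <- (gmulA _ (y ** x) z2), H2w, !gmulA, mul_comm.
  rewrite <- (gmulA _ x z1 y), H1y, gmulA, <- !gmulA, H12. reflexivity.
Qed.

Lemma commutes_of_root n x y :
  (forall y1 y2, npow y1 n = npow y2 n -> y1 = y2) ->
  commutes x (npow y n) -> commutes x y.
Proof.
  intros Hinj H. assert (E : conj y x = y).
  { apply Hinj. rewrite <- conj_npow. apply conj_id, commutes_sym, H. }
  unfold commutes. rewrite <- E at 1. apply mul_conj.
Qed.

Lemma torsion_free_zpow x m : torsion_free G -> zpow x m = gone -> m <> 0%Z -> x = gone.
Proof.
  intros Htf E Hm. destruct (Z_nat_or_neg m) as [[n ->]|[n ->]].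
  - rewrite zpow_nat in E. apply (Htf x n); [lia|exact E].
  - rewrite zpow_opp, zpow_nat in E. apply (Htf x (S n)); [lia|].
    rewrite <- (ginvK (npow x (S n))), E. apply ginv1.
Qed.

Lemma subgroup_zpow (H : G -> Prop) x n : is_subgroup G H -> H x -> H (zpow x n).
Proof.
  intros [H1 [Hmul Hinv]] Hx. induction n using Z.peano_ind.
  - exact H1.
  - rewrite zpow_succ. auto.
  - rewrite zpow_pred. auto.
Qed.

Lemma is_subgroup_gen (S : G -> Prop) : is_subgroup G (gen S).
Proof. repeat split; intros; constructor; assumption. Qed.

Lemma subgroup_comm (H : G -> Prop) x y : is_subgroup G H -> H x -> H y -> H (comm x y).
Proof. intros [H1 [Hmul Hinv]] Hx Hy. unfold comm. auto. Qed.

Section DirectDecomposition.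
Variables Gr H L : G -> Prop.
Hypothesis D : direct_decomposition G Gr H L.

Lemma direct_decomposition_commutes h l : H h -> L l -> commutes h l.
Proof.
  destruct D as [[_ [Hmul Hinv]] [[_ [Lmul Linv]] [HG [LG [Hn [Ln [Hint _]]]]]]].
  intros Hh Ll. apply comm1_commutes, Hint; unfold comm.
  - apply Hmul; [auto | apply (Hn l h); auto].
  - replace (ginv h ** (ginv l ** (h ** l))) with (conj (ginv l) h ** l)
      by (unfold conj; rewrite !gmulA; reflexivity).
    apply Lmul; auto.
Qed.

Lemma direct_decomposition_sym : direct_decomposition G Gr L H.
Proof.
  pose proof D as [SH [SL [HG [LG [Hn [Ln [Hint Hdec]]]]]]].
  split; [exact SL|]. split; [exact SH|]. do 5 (split; [auto|]).
  intros g Gg. destruct (Hdec g Gg) as [h [l [Hh [Ll ->]]]].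
  exists l, h. repeat split; auto. apply direct_decomposition_commutes; auto.
Qed.

Hypothesis L_abelian : forall x y, L x -> L y -> commutes x y.

Lemma abelian_factor_central l g : L l -> Gr g -> commutes l g.
Proof.
  pose proof D as [_ [_ [_ [_ [_ [_ [_ Hdec]]]]]]].
  intros Ll Gg. destruct (Hdec g Gg) as [h [l' [Hh [Ll' ->]]]].
  apply commutes_mulr; auto. apply commutes_sym, direct_decomposition_commutes; auto.
Qed.

Lemma comm_in_other_factor g1 g2 : Gr g1 -> Gr g2 -> H (comm g1 g2).
Proof.
  pose proof D as [SH [_ [HG [LG [_ [_ [_ Hdec]]]]]]].
  intros G1 G2.
  destruct (Hdec g1 G1) as [h1 [l1 [Hh1 [Ll1 ->]]]].
  destruct (Hdec g2 G2) as [h2 [l2 [Hh2 [Ll2 ->]]]].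
  rewrite comm_mul_central by auto using abelian_factor_central.
  apply subgroup_comm; auto.
Qed.

End DirectDecomposition.
End GroupLemmas.

Arguments commutes {G} _ _.

Section Gp.
Variable p : nat.
Hypothesis hp : (1 < p)%nat.
Variable M : Group.
Variables a b c t f s : M.
Hypothesis hab : gmul a b = gmul b a.
Hypothesis hac : gmul a c = gmul c a.
Hypothesis hbc : gmul b c = gmul c b.
Hypothesis hta : conj a t = gmul a b.
Hypothesis htb : conj b t = gmul b c.
Hypothesis htc : conj c t = c.
Hypothesis hfa : gmul f a = gmul a f.
Hypothesis hfb : gmul f b = gmul b f.
Hypothesis hfc : gmul f c = gmul c f.
Hypothesis hft : gmul f t = gmul t f.
Hypothesis hK : forall x y z n m : Z,
  gmul (zpow a x) (gmul (zpow b y) (gmul (zpow c z) (gmul (zpow t n) (zpow f m))))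
    = gone -> x = 0%Z /\ y = 0%Z /\ z = 0%Z /\ n = 0%Z /\ m = 0%Z.
Hypothesis htf : torsion_free M.
Hypothesis hroot : forall (x : M) (n : nat), (0 < n)%nat ->
  exists y : M, npow y n = x /\ forall y' : M, npow y' n = x -> y' = y.
Hypothesis hs : npow s p = gmul b f.

Local Notation P := (Z.of_nat p).
Implicit Types g : M.

Lemma npow_p_inj (x y : M) : npow x p = npow y p -> x = y.
Proof.
  intro E. destruct (hroot (npow y p) p ltac:(lia)) as [r [_ Hr]].
  rewrite (Hr x E), (Hr y eq_refl). reflexivity.
Qed.

Lemma commutes_s (x : M) : commutes x b -> commutes x f -> commutes x s.
Proof.
  intros Hb Hf. apply (commutes_of_root _ p); [exact npow_p_inj|].
  rewrite hs. apply commutes_mulr; assumption.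
Qed.

Definition u := comm s t.

Lemma conj_s_t : conj s t = s ** u.
Proof. unfold u, comm. rewrite gmulVKl. reflexivity. Qed.

Lemma conj_f_t : conj f t = f.
Proof. apply conj_id, hft. Qed.

Lemma npow_conj_s_t : npow (conj s t) p = b ** c ** f.
Proof. rewrite <- conj_npow, hs, conj_mul, htb, conj_f_t. reflexivity. Qed.

Lemma c_t : commutes c t.
Proof. unfold commutes. rewrite <- mul_conj, htc. reflexivity. Qed.

Lemma b_s : commutes b s. Proof. apply commutes_s; [apply commutes_refl | exact (eq_sym hfb)]. Qed.
Lemma c_s : commutes c s. Proof. apply commutes_s; [exact (eq_sym hbc) | exact (eq_sym hfc)]. Qed.
Lemma f_s : commutes f s. Proof. apply commutes_s; [exact hfb | apply commutes_refl]. Qed.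

Lemma s_u : commutes s u.
Proof.
  assert (Hst : commutes s (conj s t)).
  { apply (commutes_of_root _ p); [exact npow_p_inj|]. rewrite npow_conj_s_t.
    repeat apply commutes_mulr; apply commutes_sym; auto using b_s, c_s, f_s. }
  apply commutes_mulr; [apply commutes_invr, commutes_refl | exact Hst].
Qed.

Lemma npow_u : npow u p = c.
Proof.
  pose proof npow_conj_s_t as E.
  rewrite conj_s_t, <- !zpow_nat, zpow_mul_commutes, !zpow_nat, hs in E by exact s_u.
  apply (gmul_cancel_l _ (b ** f)). rewrite E, <- !gmulA, hfc. reflexivity.
Qed.

Lemma commutes_u (x : M) : commutes x c -> commutes x u.
Proof.
  intro H. apply (commutes_of_root _ p); [exact npow_p_inj|]. rewrite npow_u. exact H.
Qed.

Lemma u_t : commutes u t.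
Proof. apply commutes_sym, commutes_u, commutes_sym, c_t. Qed.

Lemma gens_N_commute (x y : M) :
  In x [a; b; s; u] -> In y [a; b; s; u] -> commutes x y.
Proof.
  assert (Ha : commutes a s) by (apply commutes_s; [exact hab | exact (eq_sym hfa)]).
  assert (Hb := b_s).
  assert (Hau : commutes a u) by (apply commutes_u, hac).
  assert (Hbu : commutes b u) by (apply commutes_u, hbc).
  simpl. intros [<-|[<-|[<-|[<-|[]]]]] [<-|[<-|[<-|[<-|[]]]]];
    auto using commutes_refl, commutes_sym, s_u.
Qed.

Ltac commutes_N :=
  repeat match goal with
  | |- commutes _ (_ ** _) => apply commutes_mulr
  | |- commutes _ (zpow _ _) => apply commutes_zpowr
  | |- commutes (_ ** _) _ => apply commutes_sym
  | |- commutes (zpow _ _) _ => apply commutes_sym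
  end;
  apply gens_N_commute; simpl; tauto.

(* The normal subgroup <a,b,s,u>; note f = b^-1 s^p and c = u^p. *)
Definition N x y z w := zpow a x ** (zpow b y ** (zpow s z ** zpow u w)).

Lemma N_mul x y z w x' y' z' w' :
  N x y z w ** N x' y' z' w' = N (x + x') (y + y') (z + z') (w + w').
Proof.
  unfold N. rewrite gmul_swap_mid, zpow_add by commutes_N. f_equal.
  rewrite gmul_swap_mid, zpow_add by commutes_N. f_equal.
  rewrite gmul_swap_mid, !zpow_add by commutes_N. reflexivity.
Qed.

Lemma N0 : N 0 0 0 0 = gone.
Proof. unfold N. simpl. rewrite !gmul1l. reflexivity. Qed.

Lemma N_inv x y z w : ginv (N x y z w) = N (- x) (- y) (- z) (- w).
Proof. symmetry. apply ginv_unique. rewrite N_mul, !Z.add_opp_diag_r. apply N0. Qed.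

Lemma N_commute x y z w x' y' z' w' : commutes (N x y z w) (N x' y' z' w').
Proof. unfold commutes. rewrite !N_mul. f_equal; lia. Qed.

Lemma zpow_N x y z w n : zpow (N x y z w) n = N (x * n) (y * n) (z * n) (w * n).
Proof.
  induction n using Z.peano_ind.
  - rewrite !Z.mul_0_r. symmetry. apply N0.
  - rewrite zpow_succ, IHn, N_mul. f_equal; lia.
  - rewrite zpow_pred, IHn, N_inv, N_mul. f_equal; lia.
Qed.

Lemma zpow_a_N x : zpow a x = N x 0 0 0.
Proof. unfold N. simpl. rewrite !gmul1r. reflexivity. Qed.
Lemma zpow_b_N y : zpow b y = N 0 y 0 0.
Proof. unfold N. simpl. rewrite !gmul1r, gmul1l. reflexivity. Qed.
Lemma zpow_s_N z : zpow s z = N 0 0 z 0.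
Proof. unfold N. simpl. rewrite !gmul1r, !gmul1l. reflexivity. Qed.
Lemma zpow_u_N w : zpow u w = N 0 0 0 w.
Proof. unfold N. simpl. rewrite !gmul1l. reflexivity. Qed.

Lemma conj_N_t x y z w : conj (N x y z w) t = N x (x + y) z (w + P * y + z).
Proof.
  assert (Hbt : conj b t = b ** zpow u P) by (rewrite htb, zpow_nat, npow_u; reflexivity).
  unfold N at 1. rewrite !conj_mul, !conj_zpow, hta, Hbt, conj_s_t, (conj_id _ u t u_t).
  rewrite !zpow_mul_commutes by commutes_N. rewrite <- zpow_mul.
  rewrite zpow_a_N, !zpow_b_N, !zpow_s_N, !zpow_u_N, !N_mul. f_equal; lia.
Qed.

Lemma N_mul_t x y z w : N x y z w ** t = t ** N x (x + y) z (w + P * y + z).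
Proof. rewrite <- conj_N_t, mul_conj. reflexivity. Qed.

Lemma N_mul_tV x y z w : N x y z w ** ginv t = ginv t ** N x (y - x) z (w - P * (y - x) - z).
Proof.
  apply (gmul_cancel_r _ t). rewrite gmulVKr, <- gmulA, N_mul_t, gmulKl. f_equal; lia.
Qed.

Lemma N_mul_tpow n x y z w :
  exists y' w', N x y z w ** zpow t n = zpow t n ** N x y' z w'.
Proof.
  revert y w. induction n using Z.peano_ind; intros y w.
  - exists y, w. rewrite gmul1l, gmul1r. reflexivity.
  - destruct (IHn y w) as [y' [w' E]]. eexists; eexists.
    rewrite zpow_succ, gmulA, E, <- gmulA, N_mul_t, gmulA. reflexivity.
  - destruct (IHn y w) as [y' [w' E]]. eexists; eexists.
    rewrite zpow_pred, gmulA, E, <- gmulA, N_mul_tV, gmulA. reflexivity.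
Qed.

Lemma N_bu_mul_tpow n y w : N 0 y 0 w ** zpow t n = zpow t n ** N 0 y 0 (w + P * n * y).
Proof.
  revert w. induction n using Z.peano_ind; intro w.
  - rewrite gmul1l, gmul1r. f_equal. lia.
  - rewrite zpow_succ, gmulA, IHn, <- gmulA, N_mul_t, gmulA. f_equal. f_equal; lia.
  - rewrite zpow_pred, gmulA, IHn, <- gmulA, N_mul_tV, gmulA. f_equal. f_equal; lia.
Qed.

(* Taking p-th powers (s^p = bf, u^p = c) lands in K, where the normal form is faithful. *)
Lemma zpow_t_eq_N n x y z w :
  zpow t n = N x y z w -> n = 0%Z /\ x = 0%Z /\ y = 0%Z /\ z = 0%Z /\ w = 0%Z.
Proof.
  intro E.
  assert (E1 : zpow t (n * P) = zpow a (x * P) ** (zpow b (y * P) **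
                 ((zpow b z ** zpow f z) ** zpow c w))).
  { rewrite zpow_mul, E, zpow_N. unfold N. do 2 f_equal.
    rewrite (Z.mul_comm z), (Z.mul_comm w), !zpow_mul, !zpow_nat, hs, npow_u.
    rewrite zpow_mul_commutes by exact (eq_sym hfb). reflexivity. }
  assert (E2 : zpow a (x * P) ** (zpow b (y * P + z) **
                 (zpow c w ** (zpow t (- (n * P)) ** zpow f z))) = gone).
  { rewrite (commutes_zpow _ t f) by exact (eq_sym hft).
    rewrite (gmulA _ (zpow c w)), (commutes_zpow _ c f) by exact (eq_sym hfc).
    transitivity (zpow t (n * P) ** zpow t (- (n * P))).
    - rewrite E1, zpow_add, !gmulA. reflexivity.
    - rewrite <- zpow_add, Z.add_opp_diag_r. reflexivity. }
  destruct (hK _ _ _ _ _ E2) as [? [? [? [? ?]]]]. nia.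
Qed.

Definition normal_form g n x y z w := g = zpow t n ** N x y z w.

Lemma normal_form_unique g n x y z w n' x' y' z' w' :
  normal_form g n x y z w -> normal_form g n' x' y' z' w' ->
  n = n' /\ x = x' /\ y = y' /\ z = z' /\ w = w'.
Proof.
  unfold normal_form. intros -> E.
  assert (E' : zpow t (- n' + n) = N (x' + - x) (y' + - y) (z' + - z) (w' + - w)).
  { rewrite zpow_add, zpow_opp, <- N_mul, <- N_inv. apply (gmul_cancel_r _ (N x y z w)).
    rewrite gmulVKr, <- gmulA, E, gmulKl. reflexivity. }
  apply zpow_t_eq_N in E'. lia.
Qed.

Lemma normal_form_N x y z w : normal_form (N x y z w) 0 x y z w.
Proof. unfold normal_form. rewrite gmul1l. reflexivity. Qed.

Lemma normal_form_mul g1 g2 n x y z w m x' y' z' w' :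
  normal_form g1 n x y z w -> normal_form g2 m x' y' z' w' ->
  exists y'' w'', normal_form (g1 ** g2) (n + m) (x + x') y'' (z + z') w''.
Proof.
  unfold normal_form. intros -> ->. destruct (N_mul_tpow m x y z w) as [y1 [w1 E]].
  exists (y1 + y')%Z, (w1 + w')%Z.
  rewrite zpow_add, <- !gmulA, (gmulA _ (N x y z w)), E, <- gmulA, N_mul. reflexivity.
Qed.

Lemma normal_form_inv g n x y z w :
  normal_form g n x y z w -> exists y' w', normal_form (ginv g) (- n) (- x) y' (- z) w'.
Proof.
  unfold normal_form. intros ->.
  destruct (N_mul_tpow (- n) (- x) (- y) (- z) (- w)) as [y1 [w1 E]].
  exists y1, w1. rewrite ginvM, N_inv, <- zpow_opp. exact E.
Qed.

Definition Gp := gen (fun g => g = a \/ g = b \/ g = c \/ g = t \/ g = f \/ g = s).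

Lemma Gp_a : Gp a. Proof. apply gen_in. tauto. Qed.
Lemma Gp_b : Gp b. Proof. apply gen_in. tauto. Qed.
Lemma Gp_t : Gp t. Proof. apply gen_in. tauto. Qed.
Lemma Gp_s : Gp s. Proof. apply gen_in. tauto. Qed.

Lemma Gp_normal_form g : Gp g -> exists n x y z w, normal_form g n x y z w.
Proof.
  induction 1 as [g Hg| |g1 g2 _ [n [x [y [z [w H1]]]]] _ [m [x' [y' [z' [w' H2]]]]]
                 |g _ [n [x [y [z [w H1]]]]]].
  - unfold normal_form. destruct Hg as [->|[->|[->|[->|[->| ->]]]]].
    + exists 0%Z, 1%Z, 0%Z, 0%Z, 0%Z. rewrite <- zpow_a_N, zpow1, gmul1l. reflexivity.
    + exists 0%Z, 0%Z, 1%Z, 0%Z, 0%Z. rewrite <- zpow_b_N, zpow1, gmul1l. reflexivity.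
    + exists 0%Z, 0%Z, 0%Z, 0%Z, P. rewrite <- zpow_u_N, zpow_nat, npow_u, gmul1l.
      reflexivity.
    + exists 1%Z, 0%Z, 0%Z, 0%Z, 0%Z. rewrite N0, zpow1, gmul1r. reflexivity.
    + exists 0%Z, 0%Z, (-1)%Z, P, 0%Z.
      replace (N 0 (-1) P 0) with (N 0 (-1) 0 0 ** N 0 0 P 0) by apply N_mul.
      rewrite gmul1l, <- zpow_b_N, <- zpow_s_N, zpow_nat.
      simpl. rewrite hs, gmul1r, gmulKl. reflexivity.
    + exists 0%Z, 0%Z, 0%Z, 1%Z, 0%Z. rewrite <- zpow_s_N, zpow1, gmul1l. reflexivity.
  - exists 0%Z, 0%Z, 0%Z, 0%Z, 0%Z. unfold normal_form. rewrite N0, gmul1l. reflexivity.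
  - destruct (normal_form_mul _ _ _ _ _ _ _ _ _ _ _ _ H1 H2) as [y'' [w'' E]]. eauto 6.
  - destruct (normal_form_inv _ _ _ _ _ _ H1) as [y' [w' E]]. eauto 6.
Qed.

Lemma Gp_comm g1 g2 : Gp g1 -> Gp g2 -> exists y w, comm g1 g2 = N 0 y 0 w.
Proof.
  intros G1 G2.
  destruct (Gp_normal_form _ G1) as [n [x [y [z [w H1]]]]].
  destruct (Gp_normal_form _ G2) as [m [x' [y' [z' [w' H2]]]]].
  destruct (normal_form_inv _ _ _ _ _ _ H1) as [y1 [w1 I1]].
  destruct (normal_form_inv _ _ _ _ _ _ H2) as [y2 [w2 I2]].
  destruct (normal_form_mul _ _ _ _ _ _ _ _ _ _ _ _ H1 H2) as [y3 [w3 M3]].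
  destruct (normal_form_mul _ _ _ _ _ _ _ _ _ _ _ _ I2 M3) as [y4 [w4 M4]].
  destruct (normal_form_mul _ _ _ _ _ _ _ _ _ _ _ _ I1 M4) as [y5 [w5 M5]].
  exists y5, w5. unfold comm. rewrite M5.
  replace (- n + (- m + (n + m)))%Z with 0%Z by lia.
  replace (- x + (- x' + (x + x')))%Z with 0%Z by lia.
  replace (- z + (- z' + (z + z')))%Z with 0%Z by lia.
  apply gmul1l.
Qed.

(* Conjugating b^y0 u^w0 by t^n multiplies it by u^(p n y0). *)
Lemma Gp_centralizer_N g y0 w0 :
  Gp g -> commutes g (N 0 y0 0 w0) -> y0 <> 0%Z -> exists x y z w, g = N x y z w.
Proof.
  intros Gg C Hy0. destruct (Gp_normal_form _ Gg) as [n [x [y [z [w Hg]]]]].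
  assert (N1 : normal_form (g ** N 0 y0 0 w0) n (x + 0) (y + y0) (z + 0) (w + w0)).
  { unfold normal_form in *. rewrite Hg, <- gmulA, N_mul. reflexivity. }
  assert (N2 : normal_form (g ** N 0 y0 0 w0) n (0 + x) (y0 + y) (0 + z)
                 (w0 + P * n * y0 + w)).
  { unfold normal_form in *. rewrite C, Hg, gmulA, N_bu_mul_tpow, <- gmulA, N_mul.
    reflexivity. }
  destruct (normal_form_unique _ _ _ _ _ _ _ _ _ _ _ N1 N2) as [_ [_ [_ [_ Hw]]]].
  assert (n = 0%Z) by nia. subst n.
  exists x, y, z, w. rewrite Hg. apply gmul1l.
Qed.

Lemma Gp_center g : Gp g -> commutes g b -> commutes g t ->
  exists y w, g = N 0 y (- (P * y)) w.
Proof.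
  intros Gg Cb Ct. rewrite <- (zpow1 _ b), zpow_b_N in Cb.
  destruct (Gp_centralizer_N _ _ _ Gg Cb ltac:(lia)) as [x [y [z [w ->]]]].
  unfold commutes in Ct. rewrite N_mul_t in Ct. apply gmul_cancel_l in Ct.
  assert (E : normal_form (N x y z w) 0 x (x + y) z (w + P * y + z))
    by (rewrite <- Ct; apply normal_form_N).
  apply (normal_form_unique _ _ _ _ _ _ _ _ _ _ _ (normal_form_N x y z w)) in E.
  exists y, w. f_equal; lia.
Qed.

Lemma Gp_u : Gp u.
Proof. unfold u. apply subgroup_comm; [apply is_subgroup_gen | apply Gp_s | apply Gp_t]. Qed.

Lemma comm_a_t : comm a t = b.
Proof. unfold comm. fold (conj a t). rewrite hta, gmulKl. reflexivity. Qed.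

Lemma zpow_u_eq1 m : zpow u m = gone -> m = 0%Z.
Proof.
  intro E. rewrite zpow_u_N, <- N0 in E.
  assert (E' : normal_form (N 0 0 0 m) 0 0 0 0 0) by (rewrite E; apply normal_form_N).
  apply (normal_form_unique _ _ _ _ _ _ _ _ _ _ _ (normal_form_N 0 0 0 m)) in E'. lia.
Qed.

Section Factors.
Variables H L : M -> Prop.
Hypothesis D : direct_decomposition M Gp H L.

Lemma abelian_factor_trivial :
  (forall x y, L x -> L y -> commutes x y) -> trivial_sub M L.
Proof.
  intro Lab. pose proof D as [SH [SL [HG [LG [_ [_ [Hint Hdec]]]]]]].
  pose proof SH as [H1 [Hmul _]].
  assert (Hcen := abelian_factor_central _ _ _ _ D Lab).
  assert (Hcomm := comm_in_other_factor _ _ _ _ D Lab).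
  assert (Hb : H b) by (rewrite <- comm_a_t; auto using Gp_a, Gp_t).
  assert (Hu : H u) by (apply Hcomm; auto using Gp_s, Gp_t).
  assert (Hs : H s).
  { destruct (Hdec s Gp_s) as [h [l [Hh [Ll Es]]]].
    destruct (Gp_center l (LG _ Ll) (Hcen _ _ Ll Gp_b) (Hcen _ _ Ll Gp_t)) as [y [w El]].
    (* l = b^y s^(-py) u^w = b^y h^(-py) u^w l^(-py), and l^(-py) is central *)
    assert (E : zpow l (1 + P * y) = zpow b y ** (zpow h (- (P * y)) ** zpow u w)).
    { apply (gmul_cancel_r _ (zpow l (- (P * y)))).
      rewrite <- zpow_add, Z.add_opp_r, Z.add_simpl_r, zpow1, El at 1. unfold N. cbn [zpow].
      rewrite gmul1l, Es, zpow_mul_commutes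
        by (apply direct_decomposition_commutes with Gp H L; auto).
      rewrite <- !gmulA. do 2 f_equal. apply commutes_zpow, Hcen; auto using Gp_u. }
    assert (Hl1 : zpow l (1 + P * y) = gone).
    { apply Hint; [|apply (subgroup_zpow _ L); auto].
      rewrite E. repeat apply Hmul; apply (subgroup_zpow _ H); auto. }
    apply torsion_free_zpow in Hl1; [|assumption | destruct (Z_le_gt_dec 0 y); nia].
    rewrite Es, Hl1, gmul1r. exact Hh. }
  intros l Ll. apply Hint; [|exact Ll].
  destruct (Gp_center l (LG _ Ll) (Hcen _ _ Ll Gp_b) (Hcen _ _ Ll Gp_t)) as [y [w ->]].
  unfold N. repeat apply Hmul; auto; apply (subgroup_zpow _ H); auto.
Qed.

(* A commutator b^y u^w with y <> 0 in H would force L into the abelian group N. *)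
Lemma comm_factor_u_power h1 h2 l1 l2 :
  H h1 -> H h2 -> L l1 -> L l2 -> ~ commutes l1 l2 -> exists w, comm h1 h2 = zpow u w.
Proof.
  intros Hh1 Hh2 Ll1 Ll2 NL. pose proof D as [SH [_ [HG [LG _]]]].
  destruct (Gp_comm h1 h2 (HG _ Hh1) (HG _ Hh2)) as [y [w E]].
  destruct (Z.eq_dec y 0) as [->|Hy].
  - exists w. rewrite E, zpow_u_N. reflexivity.
  - exfalso. apply NL.
    assert (Hc : forall l, L l -> commutes l (N 0 y 0 w)).
    { intros l Ll. rewrite <- E. apply commutes_sym.
      apply (direct_decomposition_commutes _ _ _ _ D); [apply subgroup_comm|]; auto. }
    destruct (Gp_centralizer_N l1 y w (LG _ Ll1) (Hc _ Ll1) Hy) as [x1 [y1 [z1 [w1 ->]]]].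
    destruct (Gp_centralizer_N l2 y w (LG _ Ll2) (Hc _ Ll2) Hy) as [x2 [y2 [z2 [w2 ->]]]].
    apply N_commute.
Qed.

End Factors.

Lemma Gp_indecomposable : directly_indecomposable Gp.
Proof.
  intros H L D.
  destruct (classic (exists x y, L x /\ L y /\ ~ commutes x y))
    as [[l1 [l2 [Ll1 [Ll2 NL]]]] | LA].
  2: { right. apply (abelian_factor_trivial H L D).
       intros x y Lx Ly. apply NNPP. intro NC. apply LA. eauto. }
  destruct (classic (exists x y, H x /\ H y /\ ~ commutes x y))
    as [[h1 [h2 [Hh1 [Hh2 NH]]]] | HA].
  2: { left. apply (abelian_factor_trivial L H (direct_decomposition_sym _ _ _ _ D)).
       intros x y Hx Hy. apply NNPP. intro NC. apply HA. eauto. }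
  exfalso. pose proof D as [SH [SL [_ [_ [_ [_ [Hint _]]]]]]].
  destruct (comm_factor_u_power H L D h1 h2 l1 l2 Hh1 Hh2 Ll1 Ll2 NL) as [w Ew].
  destruct (comm_factor_u_power L H (direct_decomposition_sym _ _ _ _ D)
              l1 l2 h1 h2 Ll1 Ll2 Hh1 Hh2 NH) as [w' Ew'].
  assert (E : zpow u (w * w') = gone).
  { apply Hint.
    - rewrite zpow_mul, <- Ew. apply subgroup_zpow, subgroup_comm; auto.
    - rewrite Z.mul_comm, zpow_mul, <- Ew'. apply subgroup_zpow, subgroup_comm; auto. }
  apply zpow_u_eq1, Z.mul_eq_0 in E. destruct E as [-> | ->].
  - apply NH, comm1_commutes. rewrite Ew. reflexivity.
  - apply NL, comm1_commutes. rewrite Ew'. reflexivity.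
Qed.

End Gp.

Theorem mainTheorem18 (p : nat) (hp : (1 < p)%nat)
  (M : Group) (a b c t f : M)
  (hab : gmul a b = gmul b a) (hac : gmul a c = gmul c a) (hbc : gmul b c = gmul c b)
  (* HNN relations *)
  (hta : conj a t = gmul a b) (htb : conj b t = gmul b c) (htc : conj c t = c)
  (hfa : gmul f a = gmul a f) (hfb : gmul f b = gmul b f)
  (hfc : gmul f c = gmul c f) (hft : gmul f t = gmul t f)
  (* faithfulness: the subgroup <a,b,c,t,f> is isomorphic to K *)
  (hK : forall x y z n m : Z,
      gmul (zpow a x) (gmul (zpow b y) (gmul (zpow c z) (gmul (zpow t n) (zpow f m))))
        = gone -> x = 0%Z /\ y = 0%Z /\ z = 0%Z /\ n = 0%Z /\ m = 0%Z)
  (* M is a rational closure of K *)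
  (hnil : nilpotent M) (htf : torsion_free M)
  (hroot : forall (x : M) (n : nat), (0 < n)%nat ->
      exists y : M, npow y n = x /\ forall y' : M, npow y' n = x -> y' = y)
  (hpow : forall x : M, exists n : nat, (0 < n)%nat /\
      gen (fun z => z = a \/ z = b \/ z = c \/ z = t \/ z = f) (npow x n))
  (s : M) (hs : npow s p = gmul b f) :
  directly_indecomposable
    (gen (fun z => z = a \/ z = b \/ z = c \/ z = t \/ z = f \/ z = s)).
Proof.
  intros. eapply Gp_indecomposable; eassumption.
Qed.
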